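(* Let $G$ be a connected edge-stable equimatchable graph with a cut vertex $v$. Then: (i) if $v$ is a weak vertex in $G$, then every vertex of $N(v)$ is a strong vertex in $G-v$; (ii) if $v$ is a strong vertex in $G$, then every vertex of $N(v)$ is a weak vertex in $G-v$, and moreover $G\setminus\{v,w\}$ is an edge-stable equimatchable graph for each $w\in N(v)$.
   Context: All graphs are finite and simple. A graph is equimatchable if all its maximal matchings have the same cardinality; an equimatchable graph $G$ is edge-stable if $G\setminus e$ (delete edge $e$, keep vertices) is equimatchable for every $e\in E(G)$. A vertex $v$ of a graph $H$ is strong in $H$ if every maximal matching of $H$ saturates $v$ (has $v$ as an endpoint of one of its edges), and weak otherwise. $G\setminus\{v,w\}$ is the subgraph induced by $V(G)\setminus\{v,w\}$. *)

(* Finite simple graphs on a finite vertex type T,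
   represented by a vertex set and a set of 2-element edges. *)
From mathcomp Require Import all_boot.
Set Implicit Arguments. Unset Strict Implicit. Unset Printing Implicit Defensive.

Record graph (T : finType) := Graph { verts : {set T}; edges : {set {set T}} }.

Section Defs.
Variable T : finType.
Implicit Types (G : graph T) (v w : T) (M : {set {set T}}) (e : {set T}).

Definition simple_graph G : Prop :=
  forall e, e \in edges G -> e \subset verts G /\ #|e| = 2.

Definition adj G : rel T := fun x y => [set x; y] \in edges G.

Definition nbhd G v : {set T} := [set w | adj G v w].

Definition del_edge G e : graph T := Graph (verts G) (edges G :\ e).

Definition del_verts G (S : {set T}) : graph T :=
  Graph (verts G :\: S) [set f in edges G | [disjoint f & S]].

Definition del_vertex G v : graph T := del_verts G [set v].

Definition matching G M : Prop :=
  M \subset edges G /\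
  (forall e1 e2, e1 \in M -> e2 \in M -> e1 != e2 -> [disjoint e1 & e2]).

Definition maximal_matching G M : Prop :=
  matching G M /\ (forall M', matching G M' -> M \subset M' -> M' = M).

Definition equimatchable G : Prop :=
  forall M1 M2, maximal_matching G M1 -> maximal_matching G M2 -> #|M1| = #|M2|.

Definition edge_stable G : Prop :=
  equimatchable G /\ forall e, e \in edges G -> equimatchable (del_edge G e).

Definition saturates M v : Prop := exists2 e, e \in M & v \in e.

Definition strong G v : Prop :=
  v \in verts G /\ forall M, maximal_matching G M -> saturates M v.

Definition weak G v : Prop :=
  v \in verts G /\ ~ (forall M, maximal_matching G M -> saturates M v).

Definition connected G : Prop :=
  forall x y, x \in verts G -> y \in verts G -> connect (adj G) x y.

(* v is a cut vertex: deleting it disconnects two vertices that were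
   connected in G (i.e. the number of components increases) *)
Definition cut_vertex G v : Prop :=
  v \in verts G /\
  exists x y, [/\ x \in verts G :\ v, y \in verts G :\ v,
                  connect (adj G) x y & ~~ connect (adj (del_vertex G v)) x y].
End Defs.

(* If [v] is strong and [w] in [N(v)] were strong in [G - v], take a maximal
   matching [M] of [G \ {v,w}], so that [vw + M] is maximal in [G].  Extending
   [M] to a maximal matching of [G - v] must cover [w], and extending that one in
   [G] must cover [v]: this gives a maximal matching of [G] with at least
   [|M| + 2] edges.  Edge-stability passes to [G \ {v,w}] because the maximal
   matchings of [G \ {v,w}] are those of [G] through [vw], with [vw] removed.

   If [v] is weak and [w] in [N(v)] is weak in [G - v], pick maximal matchings
   [M1] of [G - v] missing [w] and [M0] of [G] missing [v], the component [C] of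
   [w] in [G - v], and, [v] being a cut vertex, a neighbour [u] of [v] outside
   [C].  No edge of [G - v] crosses the boundary of [C], so matchings can be
   spliced along [C].  Both [vw + (M1 inside C) + (M0 outside C)] and a maximal
   extension of [vu + (M1 inside C)] are maximal matchings of [G]; the second one
   has no further edges inside [C], so equimatchability makes its part [N]
   outside [C] as large as [M0 outside C].  Then [vu + (M0 inside C) + N] is a
   matching with [|M0| + 1] edges, which is impossible. *)

From mathcomp Require Import all_boot zify.
From Stdlib Require Import Classical.
Set Implicit Arguments. Unset Strict Implicit. Unset Printing Implicit Defensive.

Section Matchings.
Variable T : finType.
Implicit Types (G H : graph T) (M N Z : {set {set T}}) (S C f g : {set T}) (v w x : T).

Lemma in_edges_del_verts G S f :
  (f \in edges (del_verts G S)) = (f \in edges G) && [disjoint f & S].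
Proof. by rewrite inE. Qed.

Lemma in_edges_del_vertex G v f :
  (f \in edges (del_vertex G v)) = (f \in edges G) && (v \notin f).
Proof. by rewrite in_edges_del_verts disjoint_sym disjoints1. Qed.

Lemma disjoint_set2 f x y : [disjoint f & [set x; y]] = (x \notin f) && (y \notin f).
Proof. by rewrite disjoint_sym disjoints_subset subUset !sub1set !inE. Qed.

Lemma edges_del_verts_sub G S : edges (del_verts G S) \subset edges G.
Proof. by apply/subsetP=> f; rewrite in_edges_del_verts => /andP[]. Qed.

Lemma edges_del_vertsS G S1 S2 :
  S1 \subset S2 -> edges (del_verts G S2) \subset edges (del_verts G S1).
Proof.
move=> sS12; apply/subsetP=> f; rewrite !in_edges_del_verts => /andP[-> fS2].
exact: disjointWr sS12 fS2.
Qed.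

Lemma simple_graph_del_verts G S : simple_graph G -> simple_graph (del_verts G S).
Proof.
move=> simpleG f; rewrite in_edges_del_verts => /andP[/simpleG[fG f2] fS].
by rewrite subsetD fG fS.
Qed.

Lemma adj_sym G : symmetric (adj G).
Proof. by move=> x y; rewrite /adj setUC. Qed.

Lemma adj_del_vertex G v x y :
  adj (del_vertex G v) x y = [&& adj G x y, x != v & y != v].
Proof. by rewrite /adj in_edges_del_vertex !inE negb_or !(eq_sym v). Qed.

Lemma not_saturates M x f : ~ saturates M x -> f \in M -> x \notin f.
Proof. by move=> unsat fM; apply/negP=> xf; apply: unsat; exists f. Qed.

Lemma matching0 G : matching G set0.
Proof. by split=> [|e1]; rewrite ?sub0set ?inE. Qed.

Lemma matching_subgraph G H M : edges G \subset edges H -> matching G M -> matching H M.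
Proof. by move=> sGH [sM disM]; split=> //; apply: subset_trans sM sGH. Qed.

Lemma matching_setU1 G M f : matching G M -> f \in edges G ->
  (forall g, g \in M -> g != f -> [disjoint f & g]) -> matching G (f |: M).
Proof.
move=> [sM disM] fG disf; split.
  by apply/subsetP=> g /setU1P[-> // | /(subsetP sM)].
move=> e1 e2 /setU1P[-> | e1M] /setU1P[-> | e2M] ne; first by rewrite eqxx in ne.
- by apply: disf; rewrite // eq_sym.
- by rewrite disjoint_sym disf.
- exact: disM.
Qed.

Lemma matching_del_verts_unsat G S M x :
  x \in S -> matching (del_verts G S) M -> ~ saturates M x.
Proof.
move=> xS [sM _] [f /(subsetP sM)]; rewrite in_edges_del_verts => /andP[_ fS].
by rewrite (disjointFl fS xS).
Qed.

Lemma matching_del_vertex_unsat G M v :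
  matching G M -> ~ saturates M v -> matching (del_vertex G v) M.
Proof.
move=> [sM disM] unsat; split=> //; apply/subsetP=> f fM.
by rewrite in_edges_del_vertex (subsetP sM) // (not_saturates unsat).
Qed.

Lemma notin_matching_del_verts G S M x :
  x \in S -> matching (del_verts G S) M -> S \notin M.
Proof.
by move=> xS mM; apply/negP=> SM; apply: (matching_del_verts_unsat xS mM); exists S.
Qed.

Lemma card_setU1_del_verts G S M x :
  x \in S -> matching (del_verts G S) M -> #|S |: M| = #|M|.+1.
Proof. by move=> xS mM; rewrite cardsU1 (notin_matching_del_verts xS mM). Qed.

Lemma matching_setU1_del_verts G S M :
  S \in edges G -> matching (del_verts G S) M -> matching G (S |: M).
Proof.
move=> SG mM; apply: matching_setU1 SG _.
  exact: matching_subgraph (edges_del_verts_sub G S) mM.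
by move=> g /(subsetP mM.1); rewrite in_edges_del_verts disjoint_sym => /andP[].
Qed.

Lemma matching_setD1_del_verts G S M :
  matching G M -> S \in M -> matching (del_verts G S) (M :\ S).
Proof.
move=> [sM disM] SM; split=> [|e1 e2 /setD1P[_ e1M] /setD1P[_ e2M]]; last exact: disM.
apply/subsetP=> f /setD1P[fS fM]; rewrite in_edges_del_verts (subsetP sM) //=.
exact: disM.
Qed.

Lemma maximal_matchingI G M : matching G M ->
  (forall Z, matching G Z -> M \subset Z -> Z \subset M) -> maximal_matching G M.
Proof. by move=> mM maxM; split=> // Z mZ sMZ; apply/eqP; rewrite eqEsubset maxM. Qed.

Lemma maximal_matching_mem G M f : maximal_matching G M -> f \in edges G ->
  (forall g, g \in M -> g != f -> [disjoint f & g]) -> f \in M.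
Proof.
move=> [mM maxM] fG disf; rewrite -(maxM (f |: M)) ?setU11 ?subsetUr //.
exact: matching_setU1.
Qed.

Lemma maximal_matching_subgraph G H M : edges H \subset edges G ->
  maximal_matching G M -> matching H M -> maximal_matching H M.
Proof.
by move=> sHG [_ maxM] mM; split=> // Z mZ; apply: maxM; apply: matching_subgraph mZ.
Qed.

Lemma maximal_matching_exists G M :
  matching G M -> exists2 N, maximal_matching G N & M \subset N.
Proof.
have [n] := ubnP (#|edges G| - #|M|); elim: n M => // n IHn M bound mM.
have [[N [mN sMN neNM]] | maxM] :=
  classic (exists N, [/\ matching G N, M \subset N & N != M]).
  have ltMN : #|M| < #|N| by apply: proper_card; rewrite properEneq eq_sym neNM.
  have leN : #|N| <= #|edges G| by apply: subset_leq_card; case: mN.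
  have [N' maxN' sNN'] := IHn N ltac:(lia) mN.
  by exists N'; last exact: subset_trans sMN sNN'.
exists M => //; split=> // N mN sMN; apply: NNPP => neNM.
by apply: maxM; exists N; split=> //; apply/eqP.
Qed.

Lemma maximal_matching_setU1_del_verts G S M x : x \in S -> S \in edges G ->
  maximal_matching (del_verts G S) M -> maximal_matching G (S |: M).
Proof.
move=> xS SG [mM maxM].
apply: maximal_matchingI (matching_setU1_del_verts SG mM) _ => Z mZ sZ.
have SZ : S \in Z by apply: (subsetP sZ); rewrite setU11.
have SnM := notin_matching_del_verts xS mM.
have <- : Z :\ S = M.
  apply: maxM; first exact: matching_setD1_del_verts.
  apply/subsetP=> f fM; rewrite in_setD1 (subsetP sZ) ?setU1r // andbT.
  by apply: contraNneq SnM => <-.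
by rewrite setD1K.
Qed.

Lemma equimatchable_del_verts G S x : x \in S -> S \in edges G ->
  equimatchable G -> equimatchable (del_verts G S).
Proof.
move=> xS SG eqG M1 M2 maxM1 maxM2.
have := eqG _ _ (maximal_matching_setU1_del_verts xS SG maxM1)
                (maximal_matching_setU1_del_verts xS SG maxM2).
by rewrite (card_setU1_del_verts xS maxM1.1) (card_setU1_del_verts xS maxM2.1) => -[].
Qed.

Lemma del_verts_del_edge G S f : del_edge (del_verts G S) f = del_verts (del_edge G f) S.
Proof. by congr Graph; apply/setP=> g; rewrite !inE andbA. Qed.

Lemma edge_stable_del_verts G S x : x \in S -> S \in edges G ->
  edge_stable G -> edge_stable (del_verts G S).
Proof.
move=> xS SG [eqG eqG_del]; split; first exact: equimatchable_del_verts xS SG eqG.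
move=> f; rewrite in_edges_del_verts => /andP[fG fS]; rewrite del_verts_del_edge.
apply: (equimatchable_del_verts xS _ (eqG_del f fG)).
rewrite in_setD1 SG andbT; apply/eqP=> Sf.
by move: fS; rewrite -Sf => /disjointFr/(_ xS); rewrite xS.
Qed.

Definition edge_closed G C :=
  forall f, f \in edges G -> (f \subset C) || [disjoint f & C].

Lemma edge_closed_subgraph G H C :
  edges H \subset edges G -> edge_closed G C -> edge_closed H C.
Proof. by move=> sHG clC f /(subsetP sHG)/clC. Qed.

Lemma edge_closed_disjointC G C f :
  edge_closed G C -> f \in edges G -> ~~ (f \subset C) -> [disjoint f & C].
Proof. by move=> clC /clC; case: (f \subset C). Qed.

Lemma edge_closed_disjoint G C f g : edge_closed G C ->
  f \subset C -> g \in edges G -> ~~ (g \subset C) -> [disjoint f & g].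
Proof.
move=> clC fC gG gC; rewrite disjoint_sym.
exact: disjointWr fC (edge_closed_disjointC clC gG gC).
Qed.

Lemma edge_closed_connect G x :
  simple_graph G -> edge_closed G [set y | connect (adj G) x y].
Proof.
move=> simpleG f fG; have [_ /eqP/cards2P[a [b [_ fab]]]] := simpleG f fG.
have ab : adj G a b by rewrite /adj -fab.
have conn_ab : connect (adj G) x a = connect (adj G) x b.
  apply/idP/idP=> /connect_trans; apply; apply: connect1; rewrite // adj_sym //.
rewrite fab disjoints_subset !subUset !sub1set !inE -conn_ab !andbb.
exact: orbN.
Qed.

Lemma connect_del_vertex_last G v z : z != v -> connect (adj G) z v ->
  exists2 u, adj G v u & connect (adj (del_vertex G v)) z u.
Proof.
move=> zv /connectP[p]; elim: p z zv => [|a p IHp] z zv /=.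
  by move=> _ vz; rewrite vz eqxx in zv.
case/andP=> za pa lastv; have [av | av] := eqVneq a v.
  by exists z; rewrite ?connect0 // adj_sym -av.
have [u vu au] := IHp a av pa lastv; exists u => //.
by apply: connect_trans au; apply: connect1; rewrite adj_del_vertex za zv av.
Qed.

Lemma cut_vertex_nbhd_separated G v w : connected G -> cut_vertex G v ->
  exists2 u, adj G v u & ~~ connect (adj (del_vertex G v)) w u.
Proof.
move=> connG [vG [x [y [/setD1P[xv xG] /setD1P[yv yG] _ not_xy]]]].
have symGv : connect_sym (adj (del_vertex G v)) := sym_connect_sym (@adj_sym _).
have [z [zv zG not_wz]] : exists z, [/\ z != v, z \in verts G &
    ~~ connect (adj (del_vertex G v)) w z].
  have [wx | not_wx] := boolP (connect (adj (del_vertex G v)) w x); last by exists x.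
  exists y; split=> //; apply: contra not_xy => wy.
  by apply: connect_trans wy; rewrite symGv.
have [u vu zu] := connect_del_vertex_last zv (connG z v zG vG).
by exists u => //; apply: contra not_wz => /connect_trans; apply; rewrite symGv.
Qed.

Definition splice C M N := (M :&: powerset C) :|: (N :\: powerset C).

Lemma card_splice C M N :
  #|splice C M N| = #|M :&: powerset C| + #|N :\: powerset C|.
Proof.
apply/eqP; rewrite (leq_card_setU _ _).2 disjoints_subset.
by apply/subsetP=> f; rewrite !inE => /andP[_ ->].
Qed.

Lemma matching_splice G C M N :
  edge_closed G C -> matching G M -> matching G N -> matching G (splice C M N).
Proof.
move=> clC [sM disM] [sN disN]; split.
  apply/subsetP=> f; rewrite !inE.
  by case/orP=> [/andP[/(subsetP sM)] | /andP[_ /(subsetP sN)]].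
move=> e1 e2; rewrite !inE.
move=> /orP[/andP[e1M e1C] | /andP[e1C e1N]] /orP[/andP[e2M e2C] | /andP[e2C e2N]] ne.
- exact: disM.
- exact: edge_closed_disjoint clC e1C (subsetP sN _ e2N) e2C.
- by rewrite disjoint_sym (edge_closed_disjoint clC e2C (subsetP sN _ e1N) e1C).
- exact: disN.
Qed.

(* Edges on different sides of [C] are disjoint, so [f] only has to be checked
   against the edges of [M] on its own side. *)
Lemma maximal_matching_closed_mem G H C M Z f :
  edge_closed G C -> maximal_matching G M -> matching H Z -> f \in Z ->
  f \in edges G -> (forall g, g \in M -> (g \subset C) = (f \subset C) -> g \in Z) ->
  f \in M.
Proof.
move=> clC maxM [_ disZ] fZ fG sideMZ; apply: (maximal_matching_mem maxM fG) => g gM gf.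
have gG := subsetP maxM.1.1 g gM.
have same_side : (g \subset C) = (f \subset C) -> [disjoint f & g].
  by move=> /(sideMZ g gM) gZ; apply: disZ; rewrite // eq_sym.
case: (boolP (f \subset C)) same_side => fC; case: (boolP (g \subset C)) => gC same;
  try exact: same.
  exact: edge_closed_disjoint clC fC gG gC.
by rewrite disjoint_sym (edge_closed_disjoint clC gC fG fC).
Qed.

Lemma maximal_matching_inside G H C M N : edge_closed G C ->
  maximal_matching G M -> edges H \subset edges G -> matching H N ->
  M :&: powerset C \subset N -> N :&: powerset C = M :&: powerset C.
Proof.
move=> clC maxM sHG mN sMN; apply/eqP.
rewrite eqEsubset [X in _ && X]subsetI sMN subsetIr !andbT.
apply/subsetP=> f /setIP[fN fC]; rewrite in_setI fC andbT; rewrite powersetE in fC.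
apply: maximal_matching_closed_mem clC maxM mN fN (subsetP sHG f (subsetP mN.1 f fN)) _.
by move=> g gM gC; apply: (subsetP sMN); rewrite in_setI gM powersetE gC.
Qed.

Lemma maximal_matching_splice G C M N : edge_closed G C ->
  maximal_matching G M -> maximal_matching G N -> maximal_matching G (splice C M N).
Proof.
move=> clC maxM maxN; apply: maximal_matchingI (matching_splice clC maxM.1 maxN.1) _.
move=> Z mZ sub; apply/subsetP=> f fZ; have fG := subsetP mZ.1 f fZ.
have inZ g : g \in splice C M N -> g \in Z by apply: (subsetP sub).
rewrite !inE; case: (boolP (f \subset C)) => fC; rewrite ?andbT ?andbF ?orbF /=.
  apply: maximal_matching_closed_mem clC maxM mZ fZ fG _ => g gM gC.
  by apply: inZ; rewrite !inE gM gC fC.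
apply: maximal_matching_closed_mem clC maxN mZ fZ fG _ => g gN gC.
by apply: inZ; rewrite !inE gN gC (negbTE fC) orbT.
Qed.

Section WeakCutVertex.
Variables (G : graph T) (v w u : T) (M1 M0 : {set {set T}}).
Hypotheses (simpleG : simple_graph G) (vwG : [set v; w] \in edges G).
Hypotheses (vuG : [set v; u] \in edges G).
Hypotheses (not_wu : ~~ connect (adj (del_vertex G v)) w u).
Hypotheses (maxM1 : maximal_matching (del_vertex G v) M1) (unsat_w : ~ saturates M1 w).
Hypotheses (maxM0 : maximal_matching G M0) (unsat_v : ~ saturates M0 v).

Let C := [set y | connect (adj (del_vertex G v)) w y].

Let clC : edge_closed (del_vertex G v) C.
Proof. exact: edge_closed_connect (simple_graph_del_verts (S := [set v]) simpleG). Qed.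

Let wC : w \in C.
Proof. by rewrite inE connect0. Qed.

Let uC : u \notin C.
Proof. by rewrite inE. Qed.

Let sub1_set2 (x : T) : [set v] \subset [set v; x].
Proof. by rewrite sub1set set21. Qed.

Let maxM0v : maximal_matching (del_vertex G v) M0.
Proof.
apply: maximal_matching_subgraph (edges_del_verts_sub G _) maxM0 _.
exact: matching_del_vertex_unsat maxM0.1 unsat_v.
Qed.

Let matching_inside_del_u M :
  matching (del_vertex G v) M -> matching (del_verts G [set v; u]) (M :&: powerset C).
Proof.
move=> [sM disM]; split=> [|e1 e2 /setIP[e1M _] /setIP[e2M _]]; last exact: disM.
apply/subsetP=> f /setIP[/(subsetP sM)]; rewrite powersetE in_edges_del_vertex.
rewrite in_edges_del_verts disjoint_set2 => /andP[-> ->] fC /=.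
exact: contra (subsetP fC u) uC.
Qed.

Let maximal_splice_vw : exists2 X, maximal_matching G X &
  #|X| = (#|M1 :&: powerset C| + #|M0 :\: powerset C|).+1.
Proof.
have maxN := maximal_matching_splice clC maxM1 maxM0v.
have mN : matching (del_verts G [set v; w]) (splice C M1 M0).
  split; last exact: maxN.1.2.
  apply/subsetP=> f fN; rewrite in_edges_del_verts disjoint_set2.
  have fGv := subsetP maxN.1.1 f fN; move: (fGv); rewrite in_edges_del_vertex.
  case/andP=> -> -> /=; move: fN; rewrite !inE => /orP[/andP[fM1 _] | /andP[fC _]].
    exact: not_saturates unsat_w fM1.
  by rewrite (disjointFl (edge_closed_disjointC clC fGv fC) wC).
exists ([set v; w] |: splice C M1 M0).
  apply: maximal_matching_setU1_del_verts (set21 v w) vwG _.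
  exact: maximal_matching_subgraph (edges_del_vertsS G (sub1_set2 w)) maxN mN.
by rewrite (card_setU1_del_verts (set21 v w) mN) card_splice.
Qed.

Let maximal_extension_vu : exists2 N, matching (del_verts G [set v; u]) N & exists2 X,
  maximal_matching G X & #|X| = (#|M1 :&: powerset C| + #|N :\: powerset C|).+1.
Proof.
have mK := matching_inside_del_u maxM1.1.
have [X maxX sKX] := maximal_matching_exists (matching_setU1_del_verts vuG mK).
have vuX : [set v; u] \in X by apply: (subsetP sKX); rewrite setU11.
have mN := matching_setD1_del_verts maxX.1 vuX.
exists (X :\ [set v; u]) => //; exists X => //.
have sKN : M1 :&: powerset C \subset X :\ [set v; u].
  apply/subsetP=> g gK; rewrite in_setD1 (subsetP sKX) ?setU1r // andbT.
  by apply: contraNneq (notin_matching_del_verts (set21 v u) mK) => <-.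
have inside_eq :=
  maximal_matching_inside clC maxM1 (edges_del_vertsS G (sub1_set2 u)) mN sKN.
by rewrite (cardsD1 [set v; u] X) vuX -(cardsID (powerset C) (X :\ _)) inside_eq.
Qed.

Let matching_splice_vu N : matching (del_verts G [set v; u]) N ->
  exists2 Y, matching G Y & #|Y| = (#|M0 :&: powerset C| + #|N :\: powerset C|).+1.
Proof.
move=> mN; have mK := matching_inside_del_u maxM0v.1.
have clCu := edge_closed_subgraph (edges_del_vertsS G (sub1_set2 u)) clC.
have mS := matching_splice clCu mK mN.
exists ([set v; u] |: splice C (M0 :&: powerset C) N).
  exact: matching_setU1_del_verts vuG mS.
by rewrite (card_setU1_del_verts (set21 v u) mS) card_splice -setIA setIid.
Qed.

Lemma weak_unsaturated_absurd : equimatchable G -> False.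
Proof.
move=> eqG; have [X1 maxX1 cX1] := maximal_splice_vw.
have [N mN [X2 maxX2 cX2]] := maximal_extension_vu.
have [Y mY cY] := matching_splice_vu mN.
have [Z maxZ sYZ] := maximal_matching_exists mY.
have same_outside : #|N :\: powerset C| = #|M0 :\: powerset C|.
  apply/eqP; rewrite -(eqn_add2l #|M1 :&: powerset C|) -eqSS -cX1 -cX2.
  by rewrite (eqG _ _ maxX1 maxM0) (eqG _ _ maxX2 maxM0).
have := subset_leq_card sYZ; rewrite cY same_outside (eqG _ _ maxZ maxM0).
by rewrite -(cardsID (powerset C) M0) ltnn.
Qed.

End WeakCutVertex.

Lemma strong_nbhd_weak_del_vertex G v w :
  equimatchable G -> strong G v -> [set v; w] \in edges G -> w \in verts G ->
  w != v -> weak (del_vertex G v) w.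
Proof.
move=> eqG [_ strong_v] vwG wG wv; split=> [|strong_w]; first by rewrite !inE wv wG.
have [M maxM _] := maximal_matching_exists (matching0 (del_verts G [set v; w])).
have maxX := maximal_matching_setU1_del_verts (set21 v w) vwG maxM.
have sub1_set2 : [set v] \subset [set v; w] by rewrite sub1set set21.
have [P maxP sMP] := maximal_matching_exists
  (matching_subgraph (edges_del_vertsS G sub1_set2) maxM.1).
have [Q maxQ sPQ] := maximal_matching_exists
  (matching_subgraph (edges_del_verts_sub G [set v]) maxP.1).
have ltMP : #|M| < #|P|.
  rewrite proper_card // properEneq sMP andbT; apply/eqP=> MP.
  by apply: (matching_del_verts_unsat (set22 v w) maxM.1); rewrite MP; apply: strong_w.
have ltPQ : #|P| < #|Q|.
  rewrite proper_card // properEneq sPQ andbT; apply/eqP=> PQ.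
  by apply: (matching_del_verts_unsat (set11 v) maxP.1); rewrite PQ; apply: strong_v.
have := eqG _ _ maxX maxQ; rewrite (card_setU1_del_verts (set21 v w) maxM.1).
lia.
Qed.

Lemma weak_nbhd_strong_del_vertex G v w u :
  simple_graph G -> equimatchable G -> weak G v -> [set v; w] \in edges G ->
  adj G v u -> ~~ connect (adj (del_vertex G v)) w u -> w \in verts G -> w != v ->
  strong (del_vertex G v) w.
Proof.
move=> simpleG eqG [_ weak_v] vwG vuG not_wu wG wv.
split=> [|M1 maxM1]; first by rewrite !inE wv wG.
apply: NNPP => unsat_w; apply: weak_v => M0 maxM0; apply: NNPP => unsat_v.
exact: weak_unsaturated_absurd simpleG vwG vuG not_wu maxM1 unsat_w maxM0 unsat_v eqG.
Qed.

End Matchings.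

Theorem lemma4p4 (T : finType) (G : graph T) (v : T) :
  simple_graph G -> connected G -> edge_stable G -> cut_vertex G v ->
  (weak G v -> forall w, w \in nbhd G v -> strong (del_vertex G v) w) /\
  (strong G v ->
     (forall w, w \in nbhd G v -> weak (del_vertex G v) w) /\
     (forall w, w \in nbhd G v -> edge_stable (del_verts G [set v; w]))).
Proof.
move=> simpleG connG stableG cut_v; have eqG := stableG.1.
have nbhdP w : w \in nbhd G v -> [/\ [set v; w] \in edges G, w \in verts G & w != v].
  rewrite inE => vwG; have [sub_vw card_vw] := simpleG _ vwG; split=> //.
    by apply: (subsetP sub_vw); rewrite set22.
  by apply/eqP=> wv; move: card_vw; rewrite wv setUid cards1.
split=> [weak_v w /nbhdP[vwG wG wv] | strong_v].
  have [u vuG not_wu] := cut_vertex_nbhd_separated w connG cut_v.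
  exact: weak_nbhd_strong_del_vertex simpleG eqG weak_v vwG vuG not_wu wG wv.
split=> w /nbhdP[vwG wG wv].
  exact: strong_nbhd_weak_del_vertex eqG strong_v vwG wG wv.
exact: edge_stable_del_verts (set21 v w) vwG stableG.
Qed.
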